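(* Let $f\in\mathfrak{F}_{sc}$ (with $n=2$) and let $\rho=\frac12(I+\vec n\cdot\vec\sigma)$ be a qubit state with Bloch vector $\vec n=n(\sin\theta\cos\phi,\sin\theta\sin\phi,\cos\theta)$, where $0<n\le1$, $0\le\theta\le\pi/2$, $0\le\phi<2\pi$. Define $\theta_o=\arccos(n\cos\theta)$ and $\theta_3=\arccos\sqrt{1-n^2\sin^2\theta}$, and the following pure state decompositions of $\rho$: (M) $\mathfrak{D}^{(M)}$: $|\chi_{1,2}\rangle=\cos\frac{\theta_o}{2}|0\rangle\pm e^{i\phi}\sin\frac{\theta_o}{2}|1\rangle$ with probabilities $p_{1,2}=\frac12\big(1\pm\frac{n\sin\theta}{\sin\theta_o}\big)$ (taking $p_{1,2}=\frac12$ if $\sin\theta_o=0$); (s) the spectral decomposition $\mathfrak{D}^{(s)}$: $|\psi_1\rangle=\cos\frac{\theta}{2}|0\rangle+e^{i\phi}\sin\frac{\theta}{2}|1\rangle$ with probability $\frac{1+n}{2}$ and $|\psi_2\rangle=\sin\frac{\theta}{2}|0\rangle-e^{i\phi}\cos\frac{\theta}{2}|1\rangle$ with probability $\frac{1-n}{2}$; (m$_1$) $\mathfrak{D}^{(m_1)}$: $|\psi_1\rangle=\cos\frac{\theta_3}{2}|0\rangle+e^{i\phi}\sin\frac{\theta_3}{2}|1\rangle$ and $|\psi_2\rangle=\sin\frac{\theta_3}{2}|0\rangle+e^{i\phi}\cos\frac{\theta_3}{2}|1\rangle$ with probabilities $p_{1,2}=\frac12\big(1\pm\frac{n\cos\theta}{\cos\theta_3}\big)$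 (taking $p_{1,2}=\frac12$ if $\cos\theta_3=0$). Then these are indeed pure state decompositions of $\rho$, and $$\bar C_f(\mathfrak{D}^{(m_1)})\le\bar C_f(\mathfrak{D}^{(s)})\le\bar C_f(\mathfrak{D}^{(M)})=\max_{\mathfrak{D}}\bar C_f(\mathfrak{D}),$$ where the maximum runs over all pure state decompositions of $\rho$. More explicitly, $\bar C_f(\mathfrak{D}^{(M)})=f(\cos^2\frac{\theta_o}{2},\sin^2\frac{\theta_o}{2})$, $\bar C_f(\mathfrak{D}^{(s)})=f(\cos^2\frac{\theta}{2},\sin^2\frac{\theta}{2})$, $\bar C_f(\mathfrak{D}^{(m_1)})=f(\cos^2\frac{\theta_3}{2},\sin^2\frac{\theta_3}{2})$.
   Context: Reference basis $\{|0\rangle,|1\rangle\}$ of $\mathbb{C}^2$; $\vec\sigma=(\sigma_1,\sigma_2,\sigma_3)$ are the Pauli matrices. Let $\Omega$ be the probability simplex in $\mathbb{R}^2$. $\mathfrak{F}_{sc}$ denotes the set of functions $f:\Omega\to\mathbb{R}$ such that (i) $f((1,0))=0$; (ii) $f(x_1,x_2)=f(x_2,x_1)$; (iii) $f$ is concave. For a unit vector $|\psi\rangle=\psi_0|0\rangle+\psi_1|1\rangle$, $C_f(|\psi\rangle)=f(|\psi_0|^2,|\psi_1|^2)$. A pure state decomposition of $\rho$ is a finite family $\{p_k,|\psi_k\rangle\}$ with $p_k\ge0$, $\sum_kp_k=1$, unit vectors $|\psi_k\rangle$ and $\rho=\sum_kp_k|\psi_k\rangle\langle\psi_k|$; its average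 coherence is $\bar C_f(\mathfrak{D})=\sum_kp_kC_f(|\psi_k\rangle)$. *)

From HB Require Import structures.
From mathcomp Require Import all_boot all_order all_algebra.
From mathcomp Require Import reals trigo complex.
Set Implicit Arguments. Unset Strict Implicit. Unset Printing Implicit Defensive.
Import Order.TTheory GRing.Theory Num.Theory.
Local Open Scope ring_scope.
Local Open Scope complex_scope.

Section QubitDefs.
Context {R : realType}.
Notation C := R[i].

Definition in_simplex (x1 x2 : R) : Prop := 0 <= x1 /\ 0 <= x2 /\ x1 + x2 = 1.

(* f : Omega -> R is represented as a function of two reals, only ever
   evaluated (and constrained) on the simplex. *)
Definition in_Fsc (f : R -> R -> R) : Prop :=
  f 1 0 = 0 /\
  (forall x1 x2, in_simplex x1 x2 -> f x1 x2 = f x2 x1) /\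
  (forall x1 x2 y1 y2 t, in_simplex x1 x2 -> in_simplex y1 y2 -> 0 <= t <= 1 ->
     t * f x1 x2 + (1 - t) * f y1 y2 <= f (t * x1 + (1 - t) * y1) (t * x2 + (1 - t) * y2)).

Definition sqnorm (z : C) : R := complex.Re z ^+ 2 + complex.Im z ^+ 2.

Definition ket0 : 'cV[C]_2 := delta_mx ord0 ord0.
Definition ket1 : 'cV[C]_2 := delta_mx (lift ord0 ord0) ord0.
Definition amp0 (psi : 'cV[C]_2) : C := psi ord0 ord0.
Definition amp1 (psi : 'cV[C]_2) : C := psi (lift ord0 ord0) ord0.

Definition unit_vec (psi : 'cV[C]_2) : Prop := sqnorm (amp0 psi) + sqnorm (amp1 psi) = 1.

Definition proj (psi : 'cV[C]_2) : 'M[C]_2 := psi *m (map_mx Num.conj psi)^T.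

Definition sigma1 : 'M[C]_2 :=
  delta_mx ord0 (lift ord0 ord0) + delta_mx (lift ord0 ord0) ord0.
Definition sigma2 : 'M[C]_2 :=
  (- 'i) *: delta_mx ord0 (lift ord0 ord0) + 'i *: delta_mx (lift ord0 ord0) ord0.
Definition sigma3 : 'M[C]_2 :=
  delta_mx ord0 ord0 - delta_mx (lift ord0 ord0) (lift ord0 ord0).

Definition bloch_state (n1 n2 n3 : R) : 'M[C]_2 :=
  (2%:R)^-1 *: (1%:M + n1%:C *: sigma1 + n2%:C *: sigma2 + n3%:C *: sigma3).

Definition Cf (f : R -> R -> R) (psi : 'cV[C]_2) : R :=
  f (sqnorm (amp0 psi)) (sqnorm (amp1 psi)).

Definition is_psd (rho : 'M[C]_2) (m : nat) (p : 'I_m -> R) (psi : 'I_m -> 'cV[C]_2) : Prop :=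
  (forall k, 0 <= p k) /\ \sum_(k < m) p k = 1 /\ (forall k, unit_vec (psi k)) /\
  rho = \sum_(k < m) (p k)%:C *: proj (psi k).

Definition avgCf (f : R -> R -> R) (m : nat) (p : 'I_m -> R) (psi : 'I_m -> 'cV[C]_2) : R :=
  \sum_(k < m) p k * Cf f (psi k).

Definition fam2 {T : Type} (a b : T) : 'I_2 -> T := fun k => if k == ord0 then a else b.

Definition qvec (a b : C) : 'cV[C]_2 := a *: ket0 + b *: ket1.

Definition eiphi (phi : R) : C := (cos phi)%:C + 'i * (sin phi)%:C.

(* a / b, with the convention 0 when b = 0 (so that p_{1,2} = 1/2) *)
Definition ratio0 (a b : R) : R := if b == 0 then 0 else a / b.

Definition theta_o (n theta : R) : R := acos (n * cos theta).
Definition theta_3 (n theta : R) : R := acos (Num.sqrt (1 - n ^+ 2 * sin theta ^+ 2)).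

Definition pM (n theta : R) : 'I_2 -> R :=
  let r := ratio0 (n * sin theta) (sin (theta_o n theta)) in
  fam2 (2%:R^-1 * (1 + r)) (2%:R^-1 * (1 - r)).
Definition psiM (n theta phi : R) : 'I_2 -> 'cV[C]_2 :=
  let t := theta_o n theta in
  fam2 (qvec (cos (t / 2%:R))%:C (eiphi phi * (sin (t / 2%:R))%:C))
       (qvec (cos (t / 2%:R))%:C (- (eiphi phi * (sin (t / 2%:R))%:C))).

Definition ps (n : R) : 'I_2 -> R := fam2 ((1 + n) / 2%:R) ((1 - n) / 2%:R).
Definition psis (theta phi : R) : 'I_2 -> 'cV[C]_2 :=
  fam2 (qvec (cos (theta / 2%:R))%:C (eiphi phi * (sin (theta / 2%:R))%:C))
       (qvec (sin (theta / 2%:R))%:C (- (eiphi phi * (cos (theta / 2%:R))%:C))).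

Definition pm1 (n theta : R) : 'I_2 -> R :=
  let r := ratio0 (n * cos theta) (cos (theta_3 n theta)) in
  fam2 (2%:R^-1 * (1 + r)) (2%:R^-1 * (1 - r)).
Definition psim1 (n theta phi : R) : 'I_2 -> 'cV[C]_2 :=
  let t := theta_3 n theta in
  fam2 (qvec (cos (t / 2%:R))%:C (eiphi phi * (sin (t / 2%:R))%:C))
       (qvec (sin (t / 2%:R))%:C (eiphi phi * (cos (t / 2%:R))%:C)).

End QubitDefs.

(* Every pure state decomposition of rho has average populations equal to the
   diagonal of rho, namely ((1 + n cos theta) / 2, (1 - n cos theta) / 2); by Jensen's
   inequality for the concave f its average coherence is therefore at most
   f ((1 + n cos theta) / 2, (1 - n cos theta) / 2), and this value is attained by
   (M), both of whose states have exactly these populations.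
   Each of the three explicit decompositions is built from the states
   cos (t/2) |0> + e^(i phi) sin (t/2) |1> up to the sign of one amplitude or the
   order of the two amplitudes, so by symmetry of f its average coherence is
   g (cos t) with g c = f ((1 + c) / 2, (1 - c) / 2).  Symmetry and concavity make g
   nonincreasing on [0, 1], and cos theta_o = n cos theta <= cos theta
   <= sqrt (1 - n^2 sin^2 theta) = cos theta_3. *)

From Pilot Require Import Defs.
From HB Require Import structures.
From mathcomp Require Import all_boot all_order all_algebra.
From mathcomp Require Import reals trigo complex.
From mathcomp Require Import ring lra.
Import Order.TTheory GRing.Theory Num.Theory.
Local Open Scope ring_scope.
Local Open Scope complex_scope.

Section QubitMatrices.
Context {R : realType}.
Local Notation C := R[i].
Local Notation i1 := (lift ord0 ord0 : 'I_2).

Lemma complex_ext (x y : C) :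
  complex.Re x = complex.Re y -> complex.Im x = complex.Im y -> x = y.
Proof. by case: x => a b; case: y => c d /= -> ->. Qed.

Lemma sum_ord2 (V : nmodType) (F : 'I_2 -> V) : \sum_(k < 2) F k = F ord0 + F i1.
Proof. by rewrite big_ord_recl big_ord1. Qed.

Lemma ord2P (i : 'I_2) : i = ord0 \/ i = i1.
Proof. by case: i => [[|[|//]]] Hi; [left|right]; apply/val_inj. Qed.

Lemma qvec0 (a b : C) : qvec a b ord0 ord0 = a.
Proof. by rewrite /qvec !mxE /= mulr1 mulr0 addr0. Qed.

Lemma qvec1 (a b : C) : qvec a b i1 ord0 = b.
Proof. by rewrite /qvec !mxE /= mulr1 mulr0 add0r. Qed.

Lemma fam2_0 T (a b : T) : fam2 a b ord0 = a. Proof. by []. Qed.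
Lemma fam2_1 T (a b : T) : fam2 a b i1 = b. Proof. by []. Qed.

Lemma projE (psi : 'cV[C]_2) i j : proj psi i j = psi i ord0 * (psi j ord0)^*.
Proof. by rewrite /proj !mxE big_ord1 !mxE. Qed.

Lemma mul_conj (z : C) : z * z^* = (sqnorm z)%:C.
Proof. by case: z => a b; apply: complex_ext; rewrite /sqnorm /=; ring. Qed.

Lemma sqnorm_ge0 (z : C) : 0 <= sqnorm z.
Proof. by rewrite /sqnorm addr_ge0 ?sqr_ge0. Qed.

Lemma sqnorm_phase (phi y : R) : sqnorm (eiphi phi * y%:C) = y ^+ 2.
Proof. by rewrite -[RHS]mulr1 -(cos2Dsin2 phi) /sqnorm /=; ring. Qed.

Lemma sqnorm_qvec0 (x y phi : R) : sqnorm (amp0 (qvec x%:C (eiphi phi * y%:C))) = x ^+ 2.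
Proof. by rewrite /amp0 qvec0 /sqnorm /=; ring. Qed.

Lemma sqnorm_qvec1 (x y phi : R) : sqnorm (amp1 (qvec x%:C (eiphi phi * y%:C))) = y ^+ 2.
Proof. by rewrite /amp1 qvec1 sqnorm_phase. Qed.

Lemma inv2_complex : (2^-1 : C) = (2^-1 : R)%:C.
Proof. by rewrite fmorphV rmorph_nat. Qed.

Definition qubit_density (a : R) (c : C) : 'M[C]_2 :=
  \matrix_(i, j) if i == j then (if i == ord0 then a else 1 - a)%:C
                 else if i == ord0 then c^* else c.

Lemma qubit_density_eq (A : 'M[C]_2) a c :
  A ord0 ord0 = a%:C -> A i1 i1 = (1 - a)%:C -> A ord0 i1 = c^* -> A i1 ord0 = c ->
  A = qubit_density a c.
Proof.
move=> A00 A11 A01 A10; apply/matrixP => i j; rewrite mxE.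
by case: (ord2P i) => ->; case: (ord2P j) => ->.
Qed.

Lemma bloch_state_polar (r z phi : R) :
  bloch_state (r * cos phi) (r * sin phi) z =
  qubit_density ((1 + z) / 2) ((r / 2)%:C * eiphi phi).
Proof.
by apply: qubit_density_eq; rewrite /bloch_state !mxE /= inv2_complex;
  apply: complex_ext => /=; lra.
Qed.

Lemma proj_qvec_phase (x y phi : R) : x ^+ 2 + y ^+ 2 = 1 ->
  proj (qvec x%:C (eiphi phi * y%:C)) = qubit_density (x ^+ 2) ((x * y)%:C * eiphi phi).
Proof.
move=> unit; apply: qubit_density_eq; rewrite projE ?qvec0 ?qvec1.
- by apply: complex_ext => /=; ring.
- by rewrite mul_conj sqnorm_phase -unit addrAC subrr add0r.
- by apply: complex_ext => /=; ring.
- by apply: complex_ext => /=; ring.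
Qed.

Lemma qubit_density_comb (a b : R) (c d : C) (p q : R) : p + q = 1 ->
  p%:C *: qubit_density a c + q%:C *: qubit_density b d =
  qubit_density (p * a + q * b) (p%:C * c + q%:C * d).
Proof.
move=> pq; case: c => c1 c2; case: d => d1 d2.
by apply: qubit_density_eq; rewrite !mxE /=; apply: complex_ext => /=; lra.
Qed.

Lemma is_psd_fam2 (z r phi p0 p1 x0 y0 x1 y1 : R) :
  0 <= p0 -> 0 <= p1 -> p0 + p1 = 1 ->
  x0 ^+ 2 + y0 ^+ 2 = 1 -> x1 ^+ 2 + y1 ^+ 2 = 1 ->
  p0 * x0 ^+ 2 + p1 * x1 ^+ 2 = (1 + z) / 2 ->
  p0 * (x0 * y0) + p1 * (x1 * y1) = r / 2 ->
  is_psd (bloch_state (r * cos phi) (r * sin phi) z) (fam2 p0 p1)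
    (fam2 (qvec x0%:C (eiphi phi * y0%:C)) (qvec x1%:C (eiphi phi * y1%:C))).
Proof.
move=> p0_ge0 p1_ge0 p_sum unit0 unit1 pop0 coh.
split; first by move=> k; case: (ord2P k) => ->.
split; first by rewrite sum_ord2.
split.
  move=> k; case: (ord2P k) => ->;
  by rewrite /unit_vec ?fam2_0 ?fam2_1 sqnorm_qvec0 sqnorm_qvec1.
rewrite sum_ord2 !fam2_0 !fam2_1 !proj_qvec_phase // qubit_density_comb //.
by rewrite bloch_state_polar pop0 -coh !rmorphD !rmorphM; congr qubit_density; ring.
Qed.

Lemma avgCf_fam2 (f : R -> R -> R) (phi p0 p1 x0 y0 x1 y1 : R) :
  avgCf f (fam2 p0 p1)
    (fam2 (qvec x0%:C (eiphi phi * y0%:C)) (qvec x1%:C (eiphi phi * y1%:C))) =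
  p0 * f (x0 ^+ 2) (y0 ^+ 2) + p1 * f (x1 ^+ 2) (y1 ^+ 2).
Proof. by rewrite /avgCf sum_ord2 /Cf !sqnorm_qvec0 !sqnorm_qvec1. Qed.

Lemma sum_scale_proj_diag m (p : 'I_m -> R) (psi : 'I_m -> 'cV[C]_2) i :
  (\sum_(k < m) (p k)%:C *: proj (psi k)) i i =
  (\sum_(k < m) p k * sqnorm (psi k i ord0))%:C.
Proof.
rewrite summxE rmorph_sum; apply: eq_bigr => k _.
by rewrite mxE projE mul_conj rmorphM.
Qed.

Lemma is_psd_populations a c m (p : 'I_m -> R) (psi : 'I_m -> 'cV[C]_2) :
  is_psd (qubit_density a c) p psi ->
  \sum_(k < m) p k * sqnorm (amp0 (psi k)) = a /\
  \sum_(k < m) p k * sqnorm (amp1 (psi k)) = 1 - a.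
Proof.
move=> [_ [_ [_ rhoE]]]; split; apply: complexI.
  by rewrite -sum_scale_proj_diag -rhoE mxE.
by rewrite -sum_scale_proj_diag -rhoE mxE.
Qed.
End QubitMatrices.

Definition simplex_symmetric {R : realType} (f : R -> R -> R) : Prop :=
  forall x1 x2, in_simplex x1 x2 -> f x1 x2 = f x2 x1.

Definition simplex_concave {R : realType} (f : R -> R -> R) : Prop :=
  forall x1 x2 y1 y2 t, in_simplex x1 x2 -> in_simplex y1 y2 -> 0 <= t <= 1 ->
  t * f x1 x2 + (1 - t) * f y1 y2 <= f (t * x1 + (1 - t) * y1) (t * x2 + (1 - t) * y2).

Lemma in_simplex_sqr {R : realType} (x y : R) :
  x ^+ 2 + y ^+ 2 = 1 -> in_simplex (x ^+ 2) (y ^+ 2).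
Proof. by rewrite /in_simplex !sqr_ge0. Qed.

Section ConcaveOnSimplex.
Context {R : realType}.
Variable f : R -> R -> R.
Hypothesis f_concave : simplex_concave f.

Lemma in_simplex_avg m (p u v : 'I_m -> R) :
  (forall k, 0 <= p k) -> \sum_(k < m) p k = 1 -> (forall k, in_simplex (u k) (v k)) ->
  in_simplex (\sum_(k < m) p k * u k) (\sum_(k < m) p k * v k).
Proof.
move=> p_ge0 p_sum uv; split; [|split].
- by apply: sumr_ge0 => k _; apply: mulr_ge0 => //; case: (uv k).
- by apply: sumr_ge0 => k _; apply: mulr_ge0 => //; have [_ []] := uv k.
- rewrite -big_split /= -[RHS]p_sum; apply: eq_bigr => k _.
  by have [_ [_ uv1]] := uv k; rewrite -mulrDr uv1 mulr1.
Qed.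

Lemma concave_jensen m (p u v : 'I_m -> R) :
  (forall k, 0 <= p k) -> \sum_(k < m) p k = 1 -> (forall k, in_simplex (u k) (v k)) ->
  \sum_(k < m) p k * f (u k) (v k) <= f (\sum_(k < m) p k * u k) (\sum_(k < m) p k * v k).
Proof.
elim: m p u v => [|m IH] p u v p_ge0 p_sum uv.
  by move: p_sum; rewrite big_ord0 => /eqP; rewrite eq_sym oner_eq0.
rewrite !big_ord_recl in p_sum *.
set q := p ord0 in p_sum *; set S := \sum_(i < m) p (lift ord0 i) in p_sum.
have S_ge0 : 0 <= S by apply: sumr_ge0.
have [S0|S_neq0] := eqVneq S 0.
  have p_lift0 i : p (lift ord0 i) = 0.
    by apply: (psumr_eq0P (fun i _ => p_ge0 (lift ord0 i)) S0).
  have q1 : q = 1 by rewrite -p_sum S0 addr0.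
  by rewrite !big1 => [|i _|i _|i _]; rewrite ?p_lift0 ?mul0r // q1 !mul1r !addr0.
have S_gt0 : 0 < S by rewrite lt_def S_neq0.
pose w i := p (lift ord0 i) / S.
have w_ge0 i : 0 <= w i by rewrite divr_ge0.
have w_sum : \sum_(i < m) w i = 1 by rewrite -mulr_suml divff.
have rescale (a : 'I_m -> R) :
    \sum_(i < m) p (lift ord0 i) * a i = S * \sum_(i < m) w i * a i.
  by rewrite mulr_sumr; apply: eq_bigr => i _; rewrite mulrA mulrCA divff ?mulr1.
rewrite (rescale (fun i => f _ _)) (rescale (fun i => u _)) (rescale (fun i => v _)).
have qE : q = 1 - S by rewrite -p_sum addrK.
have S_le1 : S <= 1 by rewrite -p_sum lerDr p_ge0.
have w_simplex := in_simplex_avg _ _ _ _ w_ge0 w_sum (fun i => uv (lift ord0 i)).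
have := f_concave _ _ _ _ S w_simplex (uv ord0); rewrite S_ge0 S_le1 => /(_ isT).
rewrite qE !(addrC ((1 - S) * _)); apply: le_trans.
by rewrite lerD2r ler_wpM2l // IH.
Qed.

Hypothesis f_sym : simplex_symmetric f.

Lemma concave_sym_antitone a b : 0 <= a -> a <= b -> b <= 1 ->
  f ((1 + b) / 2) ((1 - b) / 2) <= f ((1 + a) / 2) ((1 - a) / 2).
Proof.
move=> a_ge0 ab b_le1; have [b0|b_neq0] := eqVneq b 0.
  by have -> : a = b by lra.
have b_gt0 : 0 < b by rewrite lt_def b_neq0; lra.
have Pb : in_simplex ((1 + b) / 2) ((1 - b) / 2) by rewrite /in_simplex; lra.
have Pb' : in_simplex ((1 - b) / 2) ((1 + b) / 2) by rewrite /in_simplex; lra.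
(* the point of parameter a is the t-combination of the point of parameter b and
   of its mirror image, where f takes the same value *)
pose t := (a + b) / (2 * b).
have t_ge0 : 0 <= t by rewrite divr_ge0 //; lra.
have t_le1 : t <= 1 by rewrite ler_pdivrMr; lra.
have := f_concave _ _ _ _ t Pb Pb'; rewrite t_ge0 t_le1 => /(_ isT).
rewrite -(f_sym _ _ Pb') -mulrDl subrKC mul1r.
have -> : t * ((1 + b) / 2) + (1 - t) * ((1 - b) / 2) = (1 + a) / 2.
  by rewrite /t; field; lra.
suff -> : t * ((1 - b) / 2) + (1 - t) * ((1 + b) / 2) = (1 - a) / 2 by [].
by rewrite /t; field; lra.
Qed.
End ConcaveOnSimplex.

Lemma avgCf_le_bloch {R : realType} (f : R -> R -> R) (r z phi : R) m
    (p : 'I_m -> R) (psi : 'I_m -> 'cV[R[i]]_2) :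
  simplex_concave f -> is_psd (bloch_state (r * cos phi) (r * sin phi) z) p psi ->
  avgCf f p psi <= f ((1 + z) / 2) ((1 - z) / 2).
Proof.
move=> f_concave psd; have [p_ge0 [p_sum [unit _]]] := psd.
move: psd; rewrite bloch_state_polar => /is_psd_populations[pop0 pop1].
have -> : (1 - z) / 2 = 1 - (1 + z) / 2 by field.
rewrite -pop1 -pop0 /avgCf /Cf; apply: concave_jensen => // k.
by split; [|split]; rewrite ?sqnorm_ge0 //; apply: unit.
Qed.

Section HalfAngles.
Context {R : realType}.

Lemma double_half (t : R) : (t / 2) *+ 2 = t.
Proof. by rewrite mulr2n -splitr. Qed.

Lemma cos_half_sqr (t : R) : cos (t / 2) ^+ 2 = (1 + cos t) / 2.
Proof. by rewrite -{2}(double_half t) cos_mulr2n mulr2n; field. Qed.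

Lemma sin_half_sqr (t : R) : sin (t / 2) ^+ 2 = (1 - cos t) / 2.
Proof. by rewrite sin2cos2 cos_half_sqr; field. Qed.

Lemma cos_sin_half (t : R) : cos (t / 2) * sin (t / 2) = sin t / 2.
Proof. by rewrite -{3}(double_half t) sin_mulr2n mulr2n; field. Qed.

Lemma cos_sin_acos (x : R) : -1 <= x <= 1 ->
  cos (acos x) = x /\ 0 <= sin (acos x) /\ sin (acos x) ^+ 2 = 1 - x ^+ 2.
Proof.
move=> x_range; have cosK : cos (acos x) = x by rewrite acosK // in_itv.
split=> //; split; last by rewrite sin2cos2 cosK.
by apply: sin_ge0_pi; rewrite acos_ge0 ?acos_lepi.
Qed.

End HalfAngles.

(* Qualified, since mathcomp's fraction library also exports a [ratio0]. *)
Lemma ratio0_spec {R : realType} (a b : R) :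
  0 <= a <= b -> 0 <= Defs.ratio0 a b <= 1 /\ Defs.ratio0 a b * b = a.
Proof.
move=> /andP[a_ge0 ab]; rewrite /Defs.ratio0; have [b0|b_neq0] := eqVneq b 0.
  by rewrite mul0r; split; lra.
have b_gt0 : 0 < b by rewrite lt_def b_neq0 (le_trans a_ge0).
by rewrite divfK // divr_ge0 ?ler_pdivrMr ?mul1r ?(ltW b_gt0).
Qed.

Section ExplicitDecompositions.
Context {R : realType}.
Variables n theta phi : R.
Hypotheses (n_ge0 : 0 <= n) (n_le1 : n <= 1).
Hypotheses (theta_ge0 : 0 <= theta) (theta_le_pihalf : theta <= pi / 2).

Let cos_ge0 : 0 <= cos theta.
Proof.
apply: cos_ge0_pihalf; rewrite theta_le_pihalf andbT (le_trans _ theta_ge0) //.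
by rewrite oppr_le0 divr_ge0 // pi_ge0.
Qed.

Let sin_ge0 : 0 <= sin theta.
Proof.
apply: sin_ge0_pi; rewrite theta_ge0 (le_trans theta_le_pihalf) // ler_pdivrMr //.
by rewrite ler_peMr ?pi_ge0 ?ler1n.
Qed.

Let cs2 : cos theta ^+ 2 + sin theta ^+ 2 = 1.
Proof. exact: cos2Dsin2 theta. Qed.

Let n2_le1 : n ^+ 2 <= 1.
Proof. by rewrite expr_le1. Qed.

Let ncos_ge0 : 0 <= n * cos theta.
Proof. exact: mulr_ge0 n_ge0 cos_ge0. Qed.

Let nsin_ge0 : 0 <= n * sin theta.
Proof. exact: mulr_ge0 n_ge0 sin_ge0. Qed.

Let ncos_range : -1 <= n * cos theta <= 1.
Proof. by rewrite mulr_ile1 ?cos_le1 // andbT (le_trans _ ncos_ge0) // lerN10. Qed.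

Lemma cos_theta_o : cos (theta_o n theta) = n * cos theta.
Proof. by have [] := cos_sin_acos _ ncos_range. Qed.

Let q := Num.sqrt (1 - n ^+ 2 * sin theta ^+ 2).

Let q_ge0 : 0 <= q.
Proof. exact: sqrtr_ge0 _. Qed.

Let nsin2_le1 : n ^+ 2 * sin theta ^+ 2 <= 1.
Proof. by rewrite mulr_ile1 ?sqr_ge0 // expr_le1 // sin_le1. Qed.

Let q_sqr : q ^+ 2 = 1 - n ^+ 2 * sin theta ^+ 2.
Proof. by rewrite sqr_sqrtr // subr_ge0. Qed.

Let q_range : -1 <= q <= 1.
Proof.
rewrite -(expr_le1 (_ : 0 < 2)%N) // q_sqr gerBl mulr_ge0 ?sqr_ge0 // andbT.
by rewrite (le_trans _ q_ge0) // lerN10.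
Qed.

Lemma cos_theta_3 : cos (theta_3 n theta) = q.
Proof. by have [] := cos_sin_acos _ q_range. Qed.

Lemma sin_theta_3 : sin (theta_3 n theta) = n * sin theta.
Proof.
have [_ [s_ge0 s_sqr]] := cos_sin_acos _ q_range.
apply: (pexpIrn (_ : 0 < 2)%N); rewrite ?nnegrE //.
by rewrite /theta_3 -/q s_sqr q_sqr exprMn; ring.
Qed.

Lemma cos_le_cos_theta_3 : cos theta <= cos (theta_3 n theta).
Proof.
by rewrite cos_theta_3 -ler_sqr ?nnegrE // q_sqr cos2sin2 lerD2l lerN2 ler_piMl ?sqr_ge0.
Qed.

Let rho := bloch_state (n * sin theta * cos phi) (n * sin theta * sin phi) (n * cos theta).

Lemma is_psd_M : is_psd rho (pM n theta) (psiM n theta phi).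
Proof.
have [cos_t [sin_t_ge0 sin_t_sqr]] := cos_sin_acos _ ncos_range.
rewrite /pM /psiM /theta_o /=; set t := acos _ in cos_t sin_t_ge0 sin_t_sqr *.
have w_spec : 0 <= n * sin theta <= sin t.
  rewrite nsin_ge0 -ler_sqr ?nnegrE // sin_t_sqr.
  have -> : (n * sin theta) ^+ 2 = n ^+ 2 - (n * cos theta) ^+ 2.
    by rewrite !exprMn -[X in X - _]mulr1 -cs2; ring.
  by rewrite lerD2r.
have [/andP[w_ge0 w_le1] wE] := ratio0_spec _ _ w_spec.
set w := Defs.ratio0 _ _ in w_ge0 w_le1 wE *.
rewrite -mulrN -rmorphN; apply: is_psd_fam2; rewrite ?sqrrN ?cos2Dsin2 //; try lra.
- by rewrite -mulrDl cos_half_sqr cos_t; lra.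
- by rewrite mulrN cos_sin_half; lra.
Qed.

Lemma is_psd_s : is_psd rho (ps n) (psis theta phi).
Proof.
rewrite /ps /psis -mulrN -rmorphN; apply: is_psd_fam2; rewrite ?sqrrN.
- by rewrite divr_ge0 ?addr_ge0.
- by rewrite divr_ge0 ?subr_ge0.
- by field.
- exact: cos2Dsin2.
- by rewrite addrC cos2Dsin2.
- by rewrite cos_half_sqr sin_half_sqr; field.
- by rewrite mulrN (mulrC (sin _)) cos_sin_half; field.
Qed.

Lemma is_psd_m1 : is_psd rho (pm1 n theta) (psim1 n theta phi).
Proof.
have w_spec : 0 <= n * cos theta <= cos (theta_3 n theta).
  by rewrite ncos_ge0 (le_trans _ cos_le_cos_theta_3) // ler_piMl.
have [/andP[w_ge0 w_le1] wE] := ratio0_spec _ _ w_spec.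
rewrite /pm1 /psim1 /=; set t := theta_3 n theta in w_spec wE *.
set w := Defs.ratio0 _ _ in w_ge0 w_le1 wE *.
apply: is_psd_fam2; rewrite ?cos2Dsin2 //; try lra.
- by rewrite addrC cos2Dsin2.
- by rewrite cos_half_sqr sin_half_sqr; lra.
- by rewrite (mulrC (sin _)) cos_sin_half /t sin_theta_3; lra.
Qed.

Variable f : R -> R -> R.
Hypotheses (f_sym : simplex_symmetric f) (f_concave : simplex_concave f).

Lemma avgCf_M : avgCf f (pM n theta) (psiM n theta phi) =
  f (cos (theta_o n theta / 2) ^+ 2) (sin (theta_o n theta / 2) ^+ 2).
Proof.
rewrite /pM /psiM /= -mulrN -rmorphN avgCf_fam2 sqrrN -mulrDl.
by rewrite [X in X * _](_ : _ = 1) ?mul1r //; field.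
Qed.

Lemma avgCf_s : avgCf f (ps n) (psis theta phi) =
  f (cos (theta / 2) ^+ 2) (sin (theta / 2) ^+ 2).
Proof.
rewrite /ps /psis -mulrN -rmorphN avgCf_fam2 sqrrN.
rewrite (f_sym (sin _ ^+ 2)) -?mulrDl;
  last by apply: in_simplex_sqr; rewrite addrC cos2Dsin2.
by rewrite [X in X * _](_ : _ = 1) ?mul1r //; field.
Qed.

Lemma avgCf_m1 : avgCf f (pm1 n theta) (psim1 n theta phi) =
  f (cos (theta_3 n theta / 2) ^+ 2) (sin (theta_3 n theta / 2) ^+ 2).
Proof.
rewrite /pm1 /psim1 /= avgCf_fam2.
rewrite (f_sym (sin _ ^+ 2)) -?mulrDl;
  last by apply: in_simplex_sqr; rewrite addrC cos2Dsin2.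
by rewrite [X in X * _](_ : _ = 1) ?mul1r //; field.
Qed.

Lemma avgCf_m1_le_s :
  avgCf f (pm1 n theta) (psim1 n theta phi) <= avgCf f (ps n) (psis theta phi).
Proof.
rewrite avgCf_m1 avgCf_s !cos_half_sqr !sin_half_sqr.
by apply: concave_sym_antitone; rewrite ?cos_le_cos_theta_3 ?cos_le1.
Qed.

Lemma avgCf_s_le_M :
  avgCf f (ps n) (psis theta phi) <= avgCf f (pM n theta) (psiM n theta phi).
Proof.
rewrite avgCf_s avgCf_M !cos_half_sqr !sin_half_sqr cos_theta_o.
by apply: concave_sym_antitone; rewrite ?ler_piMl ?cos_le1.
Qed.

Lemma avgCf_le_M m (p : 'I_m -> R) (psi : 'I_m -> 'cV[R[i]]_2) :
  is_psd rho p psi -> avgCf f p psi <= avgCf f (pM n theta) (psiM n theta phi).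
Proof. by rewrite avgCf_M cos_half_sqr sin_half_sqr cos_theta_o; apply: avgCf_le_bloch. Qed.
End ExplicitDecompositions.

Theorem mainTheorem5 (R : realType) (f : R -> R -> R) (n theta phi : R) :
  in_Fsc f ->
  0 < n <= 1 -> 0 <= theta <= pi / 2%:R -> 0 <= phi < 2%:R * pi ->
  let rho := bloch_state (n * sin theta * cos phi) (n * sin theta * sin phi) (n * cos theta) in
  let tho := theta_o n theta in
  let th3 := theta_3 n theta in
  [/\ [/\ is_psd rho (pM n theta) (psiM n theta phi),
          is_psd rho (ps n) (psis theta phi) &
          is_psd rho (pm1 n theta) (psim1 n theta phi)],
      avgCf f (pm1 n theta) (psim1 n theta phi) <= avgCf f (ps n) (psis theta phi)
        /\ avgCf f (ps n) (psis theta phi) <= avgCf f (pM n theta) (psiM n theta phi),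
      (forall (m : nat) (p : 'I_m -> R) (psi : 'I_m -> 'cV[R[i]]_2),
         is_psd rho p psi -> avgCf f p psi <= avgCf f (pM n theta) (psiM n theta phi)) &
      [/\ avgCf f (pM n theta) (psiM n theta phi) = f (cos (tho / 2%:R) ^+ 2) (sin (tho / 2%:R) ^+ 2),
          avgCf f (ps n) (psis theta phi) = f (cos (theta / 2%:R) ^+ 2) (sin (theta / 2%:R) ^+ 2) &
          avgCf f (pm1 n theta) (psim1 n theta phi) = f (cos (th3 / 2%:R) ^+ 2) (sin (th3 / 2%:R) ^+ 2)]].
Proof.
move=> [_ [f_sym f_concave]] /andP[/ltW n_ge0 n_le1] /andP[theta_ge0 theta_le] _ rho tho th3.
split.
- by split; [apply: is_psd_M | apply: is_psd_s | apply: is_psd_m1].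
- by split; [apply: avgCf_m1_le_s | apply: avgCf_s_le_M].
- by move=> m p psi; apply: avgCf_le_M.
- by split; [apply: avgCf_M | apply: avgCf_s | apply: avgCf_m1].
Qed.
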